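(* Let $A$ be a superdomain and $S\subseteq A\setminus\{0\}$ with $1\in S$, $S\cdot S\subseteq S$ and $A^2\setminus\{0\}\subseteq S$, where $A^2=\bigcup_{a\in A}a\cdot a$. Then $S$ is a Marshall coherent subset of $A$, and in $A/_mS$ the product $[a][b]$ is a singleton for all $[a],[b]\in A/_mS$.
   Context: Multivalued operations are extended to subsets by unions. A superring is a structure $(S,+,\cdot,-,0,1)$ with multivalued addition and multiplication such that $(S,+,-,0)$ is a commutative multigroup, $(S,\cdot,1)$ is a commutative multimonoid, $a\cdot0=\{0\}$, $c(a+b)\subseteq ca+cb$, and $-(ab)=(-a)b=a(-b)$ (multigroup axioms: $c\in ab\Rightarrow a\in c\,r(b)$ and $b\in r(a)c$; $b\in a\cdot1\iff a=b$; $(ab)c\subseteq a(bc)$; $ab=ba$; multimonoid: the last two and $a\in 1\cdot a$). A superdomain is a nontrivial superring in which $0\in ab$ iff $a=0$ or $b=0$. A subset $S$ of a superring $A$ is Marshall coherent if it is multiplicative ($1\in S$, $S\cdot S\subseteq S$) and whenever $x,a\in A$ and $x\in as$ for some $s\in S$, there are $P,Q\subseteq S$ with $xP=aQ$. For $a,b\in A$, $a\sim_S b$ iff there are nonempty $X,Y\subseteq S$ with $aX=bY$. The Marshall quotient $A/_mS$ is the set of $\sim_S$-classes $[a]$ with: $[c]\in[a]+[b]$ iff there exist $c'\sim c$, $a'\sim a$, $b'\sim b$ with $c'\in a'+b'$; $[c]\in[a][b]$ iff there exist $c'\sim c,a'\sim a,b'\sim b$ with $c'\in a'b'$; $-[a]:=[-a]$;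 zero $[0]$, unit $[1]$. *)

(* multivalued operations as ternary relations.
   [add a b c] means c ∈ a + b ; [mul a b c] means c ∈ a·b. *)

Record superring := SuperRing {
  car :> Type;
  add : car -> car -> car -> Prop;
  mul : car -> car -> car -> Prop;
  neg : car -> car;
  zero : car;
  one : car;
  add_rev : forall a b c, add a b c -> add c (neg b) a /\ add (neg a) c b;
  add_unit : forall a b, add a zero b <-> a = b;
  add_assoc : forall a b c d,
      (exists x, add a b x /\ add x c d) -> (exists y, add b c y /\ add a y d);
  add_comm : forall a b c, add a b c <-> add b a c;
  mul_assoc : forall a b c d,
      (exists x, mul a b x /\ mul x c d) -> (exists y, mul b c y /\ mul a y d);
  mul_comm : forall a b c, mul a b c <-> mul b a c;
  mul_one : forall a, mul one a a;
  mul_zero : forall a c, mul a zero c <-> c = zero;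
  mul_distr : forall a b c d,
      (exists x, add a b x /\ mul c x d) ->
      exists u v, mul c a u /\ mul c b v /\ add u v d;
  neg_mul_l : forall a b c, (exists d, mul a b d /\ c = neg d) <-> mul (neg a) b c;
  neg_mul_r : forall a b c, (exists d, mul a b d /\ c = neg d) <-> mul a (neg b) c
}.

Arguments add {_}. Arguments mul {_}. Arguments neg {_}.
Arguments zero {_}. Arguments one {_}.

Definition superdomain (A : superring) : Prop :=
  zero <> one :> A /\
  forall a b : A, mul a b zero <-> (a = zero \/ b = zero).

Definition mulset {A : superring} (a : A) (X : A -> Prop) : A -> Prop :=
  fun c => exists x, X x /\ mul a x c.

Definition set_eq {A : Type} (X Y : A -> Prop) : Prop := forall c, X c <-> Y c.

Definition multiplicative {A : superring} (S : A -> Prop) : Prop :=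
  S one /\ forall a b c, S a -> S b -> mul a b c -> S c.

Definition marshall_coherent {A : superring} (S : A -> Prop) : Prop :=
  multiplicative S /\
  forall x a s : A, S s -> mul a s x ->
    exists P Q : A -> Prop,
      (forall p, P p -> S p) /\ (forall q, Q q -> S q) /\
      (exists p, P p) /\ (exists q, Q q) /\
      set_eq (mulset x P) (mulset a Q).

Definition sim {A : superring} (S : A -> Prop) (a b : A) : Prop :=
  exists X Y : A -> Prop,
    (forall x, X x -> S x) /\ (forall y, Y y -> S y) /\
    (exists x, X x) /\ (exists y, Y y) /\
    set_eq (mulset a X) (mulset b Y).

(* [c] ∈ [a][b] in the Marshall quotient A/_m S *)
Definition qmul {A : superring} (S : A -> Prop) (a b c : A) : Prop :=
  exists c' a' b', sim S c' c /\ sim S a' a /\ sim S b' b /\ mul a' b' c'.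

Definition square {A : superring} (c : A) : Prop := exists a, mul a a c.

(* The products [ab] can be compared through the set product of subsets of [A], which is
   associative and commutative.  Two elements [c], [c'] are [S]-equivalent as soon as
   [cZ] and [c'Z] lie in [S] for some nonempty [Z], since then [c(c'Z) = c'(cZ)].
   For [x ∈ as] take [Z = {a}]: [xa ⊆ s(aa)] and [aa] consist of nonzero squares.
   For [c' ∈ a'b'], [c ∈ ab] with [a'X = aY], [b'U = bV] take [Z = (a'X)(b'U)]:
   regrouping, [cZ ⊆ (aa)(bb)(YV)] and [c'Z ⊆ (a'a')(b'b')(XU)], both inside [S].
   Hence all of [[a][b]] is the single class of any [c ∈ ab]. *)

From Corelib Require Import ssreflect.
From Stdlib Require Import Classical FunctionalExtensionality PropExtensionality.

Section SetProduct.

Context {A : superring}.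
Implicit Types (a b c d x y : A) (X Y Z W : A -> Prop).

Lemma mul_swap {a b c} : mul a b c -> mul b a c.
Proof. by rewrite mul_comm. Qed.

Lemma mul_assoc_r {a b c x d} : mul a b x -> mul x c d -> exists y, mul b c y /\ mul a y d.
Proof. by move=> Hab Hxc; apply: mul_assoc; exists x. Qed.

Lemma mul_assoc_l {a b c y d} : mul b c y -> mul a y d -> exists x, mul a b x /\ mul x c d.
Proof.
move=> Hbc Hay.
have [z [Hba Hcz]] := mul_assoc_r (mul_swap Hbc) (mul_swap Hay).
by exists z; split; apply: mul_swap.
Qed.

Lemma mul_zero_l b c : mul zero b c <-> c = zero.
Proof. by rewrite mul_comm mul_zero. Qed.

Lemma mul_total a b : exists c, mul a b c.
Proof.
(* Associativity applied to [0 ∈ 0a] and [0 ∈ 0b] yields an element of [ab]. *)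
have [c [Hab _]] := mul_assoc_r (proj2 (mul_zero_l a zero) eq_refl)
                               (proj2 (mul_zero_l b zero) eq_refl).
by exists c.
Qed.

Definition subset X Y := forall c, X c -> Y c.
Definition nonempty X := exists c, X c.
Definition set1 a : A -> Prop := fun x => x = a.
Definition setmul X Y : A -> Prop := fun c => exists x y, X x /\ Y y /\ mul x y c.

Lemma nonempty_set1 a : nonempty (set1 a).
Proof. by exists a. Qed.

Lemma set_ext X Y : set_eq X Y -> X = Y.
Proof. by move=> E; apply: functional_extensionality => c; apply: propositional_extensionality. Qed.

Lemma mulset_setmul a X : mulset a X = setmul (set1 a) X.
Proof.
apply: set_ext => c; split.
- by move=> [x [Xx Hm]]; exists a, x.
- by move=> [_ [x [-> [Xx Hm]]]]; exists x.
Qed.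

Lemma setmulC X Y : setmul X Y = setmul Y X.
Proof.
by apply: set_ext => c; split; move=> [x [y [Xx [Yy Hm]]]]; exists y, x;
  rewrite mul_comm.
Qed.

Lemma setmulA X Y Z : setmul (setmul X Y) Z = setmul X (setmul Y Z).
Proof.
apply: set_ext => d; split.
- move=> [e [z [[x [y [Xx [Yy Hxy]]]] [Zz Hez]]]].
  have [w [Hyz Hxw]] := mul_assoc_r Hxy Hez.
  by exists x, w; do 2 split=> //; exists y, z.
- move=> [x [e [Xx [[y [z [Yy [Zz Hyz]]]] Hxe]]]].
  have [w [Hxy Hwz]] := mul_assoc_l Hyz Hxe.
  by exists w, z; split=> //; exists x, y.
Qed.

Lemma setmulCA X Y Z : setmul X (setmul Y Z) = setmul Y (setmul X Z).
Proof. by rewrite -setmulA (setmulC X) setmulA. Qed.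

Lemma setmulACA X Y Z W :
  setmul (setmul X Y) (setmul Z W) = setmul (setmul X Z) (setmul Y W).
Proof. by rewrite !setmulA (setmulCA Y). Qed.

Lemma setmulS X X' Y Y' :
  subset X X' -> subset Y Y' -> subset (setmul X Y) (setmul X' Y').
Proof. by move=> sX sY c [x [y [Xx [Yy Hm]]]]; exists x, y; auto. Qed.

Lemma setmul_nonempty {X Y} : nonempty X -> nonempty Y -> nonempty (setmul X Y).
Proof.
move=> [x Xx] [y Yy]; have [c Hc] := mul_total x y.
by exists c, x, y.
Qed.

Lemma subset_setmul_mul {a b c Z} :
  mul a b c -> subset (setmul (set1 c) Z) (setmul (setmul (set1 a) (set1 b)) Z).
Proof. by move=> Hm; apply: setmulS => // _ ->; exists a, b. Qed.

Lemma simE (S : A -> Prop) a b :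
  sim S a b <-> exists X Y, subset X S /\ subset Y S /\ nonempty X /\ nonempty Y /\
                  setmul (set1 a) X = setmul (set1 b) Y.
Proof.
split; move=> [X [Y [sX [sY [nX [nY E]]]]]]; exists X, Y; do 4 split=> //.
- by rewrite -!mulset_setmul; apply: set_ext.
- by rewrite !mulset_setmul E.
Qed.

Lemma simI {S : A -> Prop} {a b X Y} :
  subset X S -> subset Y S -> nonempty X -> nonempty Y ->
  setmul (set1 a) X = setmul (set1 b) Y -> sim S a b.
Proof. by move=> *; apply/simE; exists X, Y. Qed.

End SetProduct.

Section Equivalence.

Context {A : superring} {S : A -> Prop}.
Hypothesis S_one : S one.
Hypothesis S_mul : forall a b c, S a -> S b -> mul a b c -> S c.
Implicit Types (a b c : A) (X Y : A -> Prop).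

Lemma setmul_subset {X Y} : subset X S -> subset Y S -> subset (setmul X Y) S.
Proof. by move=> sX sY c [x [y [Xx [Yy Hm]]]]; exact: (S_mul _ _ _ (sX x Xx) (sY y Yy) Hm). Qed.

Lemma sim_refl a : sim S a a.
Proof.
have S_set1 : subset (set1 one) S by move=> _ ->.
exact: (simI S_set1 S_set1 (nonempty_set1 one) (nonempty_set1 one)).
Qed.

Lemma sim_sym {a b} : sim S a b -> sim S b a.
Proof. by move=> /simE [X [Y [sX [sY [nX [nY E]]]]]]; apply/simE; exists Y, X. Qed.

Lemma sim_trans {a b c} : sim S a b -> sim S b c -> sim S a c.
Proof.
move=> /simE [X [Y [sX [sY [nX [nY E1]]]]]] /simE [U [V [sU [sV [nU [nV E2]]]]]].
apply: (simI (setmul_subset sX sU) (setmul_subset sV sY)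
              (setmul_nonempty nX nU) (setmul_nonempty nV nY)).
by rewrite -setmulA E1 setmulA (setmulC Y) -setmulA E2 setmulA.
Qed.

Lemma sim_of_common_factor {c c' Z} :
  nonempty Z -> subset (setmul (set1 c) Z) S -> subset (setmul (set1 c') Z) S ->
  sim S c c'.
Proof.
move=> nZ sc sc'.
apply: (simI sc' sc (setmul_nonempty (nonempty_set1 c') nZ)
              (setmul_nonempty (nonempty_set1 c) nZ)).
exact: setmulCA.
Qed.

End Equivalence.

Section Superdomain.

Context {A : superring} {S : A -> Prop}.
Hypothesis A_dom : superdomain A.
Hypothesis S_nonzero : forall s, S s -> s <> zero.
Hypothesis S_one : S one.
Hypothesis S_mul : forall a b c, S a -> S b -> mul a b c -> S c.
Hypothesis S_squares : forall c, square c -> c <> zero -> S c.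
Implicit Types (a b c x s : A) (X Y U V : A -> Prop).

Lemma sim_zero b : sim S zero b -> b = zero.
Proof.
move=> [X [Y [sX [sY [[x Xx] [nY E]]]]]].
have [y [Yy Hby]] : mulset b Y zero.
  by apply/E; exists x; split=> //; apply/mul_zero_l.
by case: (proj1 (proj2 A_dom b y) Hby) => // y0; case: (S_nonzero _ (sY y Yy)).
Qed.

Lemma setmul_square_subset a : a <> zero -> subset (setmul (set1 a) (set1 a)) S.
Proof.
move=> a_nz c [_ [_ [-> [-> Hm]]]]; apply: S_squares; first by exists a.
by move=> c0; rewrite c0 in Hm; case: (proj1 (proj2 A_dom a a) Hm).
Qed.

Lemma setmul_mixed_subset a b X U :
  a <> zero -> b <> zero -> subset X S -> subset U S ->
  subset (setmul (setmul (set1 a) (set1 b))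
                 (setmul (setmul (set1 a) X) (setmul (set1 b) U))) S.
Proof.
move=> a_nz b_nz sX sU.
rewrite [setmul (setmul _ X) _]setmulACA -setmulA [setmul (setmul (set1 a) _) _]setmulACA.
by do 2 apply: setmul_subset => //; apply: setmul_square_subset.
Qed.

Lemma sim_mul_factor {x a s} : S s -> mul a s x -> sim S x a.
Proof.
move=> Ss Hm; case: (classic (a = zero)) => [a0 | a_nz].
  by move: Hm; rewrite a0 mul_zero_l => ->; apply: sim_refl.
apply: (sim_of_common_factor (nonempty_set1 a)).
- move=> e /(subset_setmul_mul Hm).
  rewrite (setmulC (set1 a)) setmulA; apply: setmul_subset => //.
    by move=> _ ->.
  exact: setmul_square_subset.
- exact: setmul_square_subset.
Qed.

Lemma sim_mul {a b c a' b' c'} :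
  sim S a' a -> sim S b' b -> mul a' b' c' -> mul a b c -> sim S c' c.
Proof.
move=> Sa Sb Hm' Hm.
have nonzero_sim u u' : sim S u' u -> u <> zero -> u' <> zero.
  by move=> Su u_nz u'0; apply: u_nz; apply: sim_zero; rewrite -u'0.
case: (classic (a = zero)) => [a0 | a_nz].
  have a'0 : a' = zero by apply: sim_zero; rewrite -a0; apply: sim_sym.
  by move: Hm Hm'; rewrite a0 a'0 !mul_zero_l => -> ->; apply: sim_refl.
case: (classic (b = zero)) => [b0 | b_nz].
  have b'0 : b' = zero by apply: sim_zero; rewrite -b0; apply: sim_sym.
  by move: Hm Hm'; rewrite b0 b'0 !mul_zero => -> ->; apply: sim_refl.
have a'_nz := nonzero_sim _ _ Sa a_nz; have b'_nz := nonzero_sim _ _ Sb b_nz.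
move: Sa Sb => /simE [X [Y [sX [sY [nX [nY Ea]]]]]] /simE [U [V [sU [sV [nU [nV Eb]]]]]].
have nW : nonempty (setmul (setmul (set1 a') X) (setmul (set1 b') U)).
  by apply: setmul_nonempty; apply: setmul_nonempty => //; apply: nonempty_set1.
apply: (sim_of_common_factor nW).
- by move=> e /(subset_setmul_mul Hm'); apply: setmul_mixed_subset.
- by rewrite Ea Eb => e /(subset_setmul_mul Hm); apply: setmul_mixed_subset.
Qed.

Lemma marshall_coherent_of_squares : marshall_coherent S.
Proof. by split=> [// | x a s Ss Hm]; apply: sim_mul_factor Ss Hm. Qed.

Lemma qmul_class a b : exists c, forall d, qmul S a b d <-> sim S d c.
Proof.
have [c Hc] := mul_total a b; exists c => d; split.
- move=> [c' [a' [b' [Sc' [Sa [Sb Hm]]]]]].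
  exact: (sim_trans S_mul (sim_sym Sc') (sim_mul Sa Sb Hm Hc)).
- move=> Sd; exists c, a, b.
  by split; [exact: sim_sym | split; [|split]; try exact: sim_refl].
Qed.

End Superdomain.

Theorem theorem4p7 (A : superring) (S : A -> Prop) :
  superdomain A ->
  (forall s, S s -> s <> zero) ->
  S one ->
  (forall a b c, S a -> S b -> mul a b c -> S c) ->
  (forall c, square c -> c <> zero -> S c) ->
  marshall_coherent S /\
  (forall a b : A, exists c : A, forall d : A, qmul S a b d <-> sim S d c).
Proof.
move=> A_dom S_nonzero S_one S_mul S_squares; split.
- exact: marshall_coherent_of_squares.
- exact: qmul_class.
Qed.
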